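(* Let $A\in\mathbb{R}^{n\times n}$ be symmetric with $r:=\mathrm{rank}(A)$, and let $\epsilon\ge 0$. Let $S\subseteq\{1,\dots,n\}$ with $|S|=r$ be such that the principal submatrix $A[S]$ is nonsingular, and let $T$ be obtained from $S$ by replacing one element of $S$ by an element of $\{1,\dots,n\}\setminus S$. If $|\det(A[T])|\le(1+\epsilon)|\det(A[S])|$, then $|\det(A[S,T])|\le\sqrt{1+\epsilon}\,|\det(A[S])|$.
   Context: $A[S,T]$ denotes the submatrix of $A$ with row indices $S$ and column indices $T$, and $A[S]:=A[S,S]$ is the principal submatrix with row/column indices $S$ (index sets taken in a fixed order; only absolute values of determinants are involved). *)

From mathcomp Require Import all_boot all_order all_algebra.
Set Implicit Arguments. Unset Strict Implicit. Unset Printing Implicit Defensive.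
Import Order.TTheory GRing.Theory Num.Theory.
Local Open Scope ring_scope.

(* A[S,T] as a #|S| x #|S| matrix: rows indexed by S, columns by T, each in the
   increasing (enum) order.  Used only when #|T| = #|S|; the default element of
   the nth on T is irrelevant in that case. *)
Definition subA (R : nzRingType) (n : nat) (A : 'M[R]_n) (S T : {set 'I_n})
  : 'M[R]_#|S| :=
  \matrix_(i < #|S|, j < #|S|)
     A (enum_val i) (nth (enum_val i) (enum T) j).

Definition psubA (R : nzRingType) (n : nat) (A : 'M[R]_n) (S : {set 'I_n})
  : 'M[R]_#|S| := subA A S S.

From mathcomp Require Import all_boot all_order all_algebra.
Import Order.TTheory GRing.Theory Num.Theory.
Set Implicit Arguments. Unset Strict Implicit. Unset Printing Implicit Defensive.
Local Open Scope ring_scope.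

(* A symmetric matrix of rank r with a nonsingular r x r principal submatrix
   A[S] is determined by its rows in S: A = A[:,S] A[S]^-1 A[S,:].  Taking the
   minor on T gives det A[T] * det A[S] = det A[S,T]^2, so the hypothesis on
   det A[T] bounds det A[S,T]^2 by (1 + eps) det A[S]^2. *)

Section Skeleton.

Variables (F : fieldType) (m n k : nat) (A : 'M[F]_(m, n)).
Variables (f : 'I_k -> 'I_m) (g : 'I_k -> 'I_n).
Hypotheses (rankA : \rank A = k) (unit_fg : mxsub f g A \in unitmx).

Lemma mxrank_rowsub_full : \rank (rowsub f A) = k.
Proof.
have le_rank := mxrankS (rowsub_sub f A); rewrite rankA in le_rank.
apply/eqP; rewrite eqn_leq le_rank /=.
rewrite -{1}(mxrank_unit unit_fg) mxsubcr.
have -> : colsub g (rowsub f A) = rowsub f A *m colsub g 1%:M.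
  by rewrite mulmx_colsub mulmx1.
exact: mxrankM_maxl.
Qed.

Lemma mxsub_skeleton :
  A = colsub g A *m invmx (mxsub f g A) *m rowsub f A.
Proof.
have /submxP[D defA] : (A <= rowsub f A)%MS.
  have [_ <-] := mxrank_leqif_sup (rowsub_sub f A).
  by rewrite mxrank_rowsub_full rankA.
have -> : colsub g A = D *m mxsub f g A.
  by rewrite {1}defA -mulmx_colsub -mxsubcr.
by rewrite mulmxK // -defA.
Qed.

Lemma mxsub_skeletonE (l : nat) (f' : 'I_l -> 'I_m) (g' : 'I_l -> 'I_n) :
  mxsub f' g' A = mxsub f' g A *m invmx (mxsub f g A) *m mxsub f g' A.
Proof.
by rewrite {1}mxsub_skeleton mxsub_mul -mul_rowsub_mx -mxsubrc -mxsubcr.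
Qed.

End Skeleton.

Lemma det_mxsub_sym_skeleton (F : fieldType) (n k : nat) (A : 'M[F]_n)
    (f g : 'I_k -> 'I_n) :
  A^T = A -> \rank A = k -> mxsub f f A \in unitmx ->
  \det (mxsub g g A) * \det (mxsub f f A) = \det (mxsub f g A) ^+ 2.
Proof.
move=> symA rankA unit_ff.
have minor_gf : mxsub g f A = (mxsub f g A)^T by rewrite trmx_mxsub symA.
rewrite (mxsub_skeletonE rankA unit_ff) !det_mulmx det_inv minor_gf det_tr.
by rewrite mulrAC divfK -?unitfE -?unitmxE ?expr2.
Qed.

Lemma det_mxsub_cast (R : comNzRingType) (n k1 k2 : nat) (A : 'M[R]_n)
    (e : k1 = k2) (f : 'I_k2 -> 'I_n) :
  \det (mxsub (f \o cast_ord e) (f \o cast_ord e) A) = \det (mxsub f f A).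
Proof.
by subst k2; congr (\det _); apply/matrixP => i j; rewrite !mxE /= !cast_ord_id.
Qed.

Section SubmatricesAsMxsub.

Variables (R : nzRingType) (n : nat) (A : 'M[R]_n).

Lemma nth_enum_set (T : {set 'I_n}) (x : 'I_n) (j : 'I_#|T|) :
  nth x (enum T) j = enum_val j.
Proof. by apply: set_nth_default; rewrite -cardE. Qed.

Lemma subA_mxsub (S T : {set 'I_n}) (e : #|S| = #|T|) :
  subA A S T = mxsub enum_val (enum_val \o cast_ord e) A.
Proof.
by apply/matrixP => i j; rewrite !mxE /= (nth_enum_set _ (cast_ord e j)).
Qed.

Lemma psubA_mxsub (S : {set 'I_n}) : psubA A S = mxsub enum_val enum_val A.
Proof.
rewrite /psubA (subA_mxsub (erefl #|S|)).
by apply/matrixP => i j; rewrite !mxE /= cast_ord_id.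
Qed.

End SubmatricesAsMxsub.

Lemma normr_le_sqrtM (R : rcfType) (c x y : R) :
  0 <= c -> x ^+ 2 <= c * y ^+ 2 -> `|x| <= Num.sqrt c * `|y|.
Proof. by move=> c_ge0 le_xy; rewrite -!sqrtr_sqr -sqrtrM // ler_wsqrtr. Qed.

Theorem lemma2p4 (R : rcfType) (n : nat) (A : 'M[R]_n) (eps : R)
  (S T : {set 'I_n}) (s t : 'I_n) :
  A^T = A -> 0 <= eps ->
  #|S| = \rank A ->
  \det (psubA A S) != 0 ->
  s \in S -> t \notin S -> T = t |: (S :\ s) ->
  `|\det (psubA A T)| <= (1 + eps) * `|\det (psubA A S)| ->
  `|\det (subA A S T)| <= Num.sqrt (1 + eps) * `|\det (psubA A S)|.
Proof.
move=> symA eps_ge0 rankA detS_neq0 sS tS defT le_detT.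
have cardT : #|S| = #|T|.
  by rewrite defT cardsU1 in_setD1 (negPf tS) andbF (cardsD1 s S) sS.
have unitS : psubA A S \in unitmx by rewrite unitmxE unitfE.
rewrite psubA_mxsub in unitS.
have detT_detS := det_mxsub_sym_skeleton (enum_val \o cast_ord cardT)
  symA (esym rankA) unitS.
rewrite det_mxsub_cast -!psubA_mxsub -subA_mxsub in detT_detS.
apply: normr_le_sqrtM; first by rewrite addr_ge0.
rewrite -detT_detS (le_trans (ler_norm _)) // normrM -real_normK ?num_real //.
by rewrite expr2 mulrA ler_wpM2r.
Qed.
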